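(* Let $\kappa$ be any infinite cardinal. Then there is a partition $[\kappa]^{<\omega}=A_0\cup A_1$ into two cells such that for no $i\in 2$ and no uncountable family $X\subseteq[\kappa]^{<\omega}$ of pairwise disjoint finite subsets of $\kappa$ do we have $\mathrm{FU}(X)\subseteq A_i$. Consequently, for every uncountable cardinal $\lambda$ and every cardinal $\kappa\geq\lambda$, the statement $\mathrm{Hind}(\kappa,\lambda)$ fails.
   Context: $[\kappa]^{<\omega}$ denotes the family of all finite subsets of $\kappa$. For a family $X$ of sets, $\mathrm{FU}(X)=\{\bigcup_{Y\in F}Y : F\subseteq X \text{ finite and nonempty}\}$ is the set of finite unions of elements of $X$. For cardinals $\lambda\leq\kappa$, $\mathrm{Hind}(\kappa,\lambda)$ is the statement: for every partition $[\kappa]^{<\omega}=A_0\cup A_1$ into two cells there exist a family $X\subseteq[\kappa]^{<\omega}$ of cardinality $\lambda$ consisting of pairwise disjoint finite subsets of $\kappa$, and an $i\in 2$, such that $\mathrm{FU}(X)\subseteq A_i$. *)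

From mathcomp Require Import all_boot.
From mathcomp Require Import boolp classical_sets functions cardinality.
Set Implicit Arguments. Unset Strict Implicit. Unset Printing Implicit Defensive.
Local Open Scope classical_set_scope.
Local Open Scope card_scope.

Definition finsubsets (K : Type) : set (set K) := [set A | finite_set A].

Definition FU (K : Type) (X : set (set K)) : set (set K) :=
  [set U | exists F : set (set K),
      [/\ F `<=` X, finite_set F, F !=set0 & U = \bigcup_(Y in F) Y]].

Definition pw_disjoint (K : Type) (X : set (set K)) : Prop := trivIset X id.

Definition two_partition (K : Type) (A0 A1 : set (set K)) : Prop :=
  A0 `|` A1 = @finsubsets K /\ A0 `&` A1 = set0.

(* Hind(kappa, lambda), kappa = |K|, lambda = |L| *)
Definition Hind (K L : Type) : Prop :=
  forall A0 A1 : set (set K), two_partition A0 A1 ->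
    exists X : set (set K),
      [/\ X `<=` @finsubsets K, pw_disjoint X, X #= [set: L] &
          (FU X `<=` A0 \/ FU X `<=` A1)].

(** An uncountable family of finite sets has two distinct nonempty members
    of the same size [n], since only countably many sizes are available and
    the empty set is the only set of size [0].  If they are disjoint, their
    union has size [2n], and [log2 (2n) = log2 n + 1].  So colouring a finite
    set by the parity of the binary logarithm of its size, the finite unions
    of an uncountable disjoint family always meet both colours. *)
From mathcomp Require Import all_boot finmap.
From mathcomp Require Import boolp classical_sets functions cardinality.
Local Open Scope classical_set_scope.
Local Open Scope card_scope.

(* [{classic K}] only supplies the choice structure that [fset_set] needs. *)
Definition fincard {K : Type} (A : set K) : nat :=
  #|` fset_set (A : set {classic K})|.

Lemma fincard_eq0 {K : Type} {A : set K} :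
  finite_set A -> fincard A = 0 -> A = set0.
Proof.
move=> finA /eqP; rewrite cardfs_eq0 => /eqP.
exact: (fset_set_set0 (T := {classic K}) finA).
Qed.

Lemma fincardU {K : Type} {A B : set K} :
  finite_set A -> finite_set B -> A `&` B = set0 ->
  fincard (A `|` B) = fincard A + fincard B.
Proof.
move=> finA finB AB0; rewrite /fincard -cardfsUI fset_setU //.
by rewrite -(fset_setI (T := {classic K})) // AB0 fset_set0 cardfs0 addn0.
Qed.

Lemma uncountable_fincard_collision {K : Type} {X : set (set K)} :
  X `<=` @finsubsets K -> ~ countable X ->
  exists A B, [/\ X A, X B, A <> B, fincard A = fincard B & 0 < fincard A].
Proof.
move=> Xfin Xunc; apply: contra_notP Xunc => noColl.
apply/countable_injP; exists (@fincard K) => A B; rewrite !inE => XA XB eqAB.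
have [A0|Apos] := posnP (fincard A).
  rewrite (fincard_eq0 (Xfin _ XA) A0).
  by rewrite (fincard_eq0 (Xfin _ XB)) // -eqAB.
by apply: contrapT => neqAB; apply: noColl; exists A, B.
Qed.

Lemma FU_set1 {K : Type} {X : set (set K)} {A : set K} : X A -> FU X A.
Proof.
move=> XA; exists [set A]; split; first by move=> _ ->.
- exact: finite_set1.
- by exists A.
- by rewrite bigcup_set1.
Qed.

Lemma FU_setU {K : Type} {X : set (set K)} {A B : set K} :
  X A -> X B -> FU X (A `|` B).
Proof.
move=> XA XB; exists [set A; B]; split; first by move=> _ [->|->].
- exact: finite_set2.
- by exists A; left.
- by rewrite bigcup_setU1 bigcup_set1.
Qed.

Definition log2_parity_class (K : Type) (b : bool) : set (set K) :=
  [set A | finite_set A /\ odd (trunc_log 2 (fincard A)) = b].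

Lemma log2_parity_two_partition (K : Type) :
  two_partition (log2_parity_class K false) (log2_parity_class K true).
Proof.
split; apply/seteqP; split => A /=.
- by case=> -[].
- by move=> finA; case oddA: (odd (trunc_log 2 (fincard A))); [right|left].
- by move=> [[_ oddF] [_]]; rewrite oddF.
- by [].
Qed.

Lemma log2_parity_not_FU_monochromatic {K : Type} (X : set (set K)) b :
  X `<=` @finsubsets K -> pw_disjoint X -> ~ countable X ->
  ~ (FU X `<=` log2_parity_class K b).
Proof.
move=> Xfin Xdisj Xunc FUb.
have [A [B [XA XB neqAB eqAB Apos]]] := uncountable_fincard_collision Xfin Xunc.
have AB0 : A `&` B = set0.
  by apply/seteqP; split=> // x ABx; apply: neqAB; apply: Xdisj => //; exists x.
have cardAB : fincard (A `|` B) = (fincard A).*2.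
  by rewrite -addnn {2}eqAB fincardU //; apply: Xfin.
have [_ oddA] := FUb _ (FU_set1 XA).
have [_] := FUb _ (FU_setU XA XB).
by rewrite cardAB trunc_log2_double //= oddA; case: b {FUb oddA}.
Qed.

Theorem theorem2p1 :
  (forall K : Type, infinite_set [set: K] ->
     exists A0 A1 : set (set K), two_partition A0 A1 /\
       forall X : set (set K),
         X `<=` @finsubsets K -> pw_disjoint X -> ~ countable X ->
         ~ (FU X `<=` A0) /\ ~ (FU X `<=` A1))
  /\
  (forall K L : Type, ~ countable [set: L] -> [set: L] #<= [set: K] ->
     ~ Hind K L).
Proof.
split.
  move=> K _; exists (log2_parity_class K false), (log2_parity_class K true).
  split=> [|X Xfin Xdisj Xunc]; first exact: log2_parity_two_partition.
  by split; apply: log2_parity_not_FU_monochromatic.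
move=> K L Lunc _ hind.
have [X [Xfin Xdisj XL FUmono]] := hind _ _ (log2_parity_two_partition K).
have Xunc : ~ countable X.
  move=> Xc; apply: Lunc; apply: card_le_trans Xc.
  by rewrite card_eq_le in XL; case/andP: XL.
by case: FUmono; apply: log2_parity_not_FU_monochromatic.
Qed.
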